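(* Let $G$ be a compact abelian group with discrete dual group $\Gamma$ and $N \in \mathbb{N}$. Every $N$-PR set $E \subset \Gamma$ is weak $\varepsilon$-Kronecker for $\varepsilon = |1 - e^{\pi i/N}|$.
   Context: $\mathbb{T}$ is the unit circle and $\mathbb{Z}_N$ is identified with the $N$-th roots of unity in $\mathbb{T}$. A subset $E \subset \Gamma$ is $N$-PR if for every function $\varphi: E \to \mathbb{Z}_N$ there exists $x \in G$ with $\varphi(\gamma) = \gamma(x)$ for all $\gamma \in E$. For $\varepsilon > 0$, $E$ is weak $\varepsilon$-Kronecker if for every function $\varphi: E \to \mathbb{T}$ there exists $x \in G$ with $|\varphi(\gamma) - \gamma(x)| \le \varepsilon$ for all $\gamma \in E$. *)

From HB Require Import structures.
From mathcomp Require Import all_boot all_order all_algebra.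
From mathcomp Require Import all_classical all_reals all_analysis.
From mathcomp Require Import complex.
Set Implicit Arguments. Unset Strict Implicit. Unset Printing Implicit Defensive.
Import Order.TTheory GRing.Theory Num.Theory.
Import numFieldNormedType.Exports.
Local Open Scope classical_set_scope.
Local Open Scope ring_scope.

(* Continuity into R[i]
   (standard topology = product topology on R x R) is expressed through the
   real and imaginary parts. *)
Definition is_character (R : realType) (G : topologicalZmodType)
    (g : G -> R[i]) : Prop :=
  [/\ forall x y : G, g (x + y) = g x * g y,
      forall x : G, `|g x| = 1,
      continuous (fun x : G => complex.Re (g x)) &
      continuous (fun x : G => complex.Im (g x))].

Definition dual_group (R : realType) (G : topologicalZmodType) : set (G -> R[i]) :=
  [set g | is_character g].

(* Z_N identified with the N-th roots of unity in T. *)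
Definition roots_of_unity (R : realType) (N : nat) : set R[i] :=
  [set z | z ^+ N = 1].

Definition circle (R : realType) : set R[i] := [set z | `|z| = 1].

Definition N_PR (R : realType) (G : topologicalZmodType) (N : nat)
    (E : set (G -> R[i])) : Prop :=
  forall phi : (G -> R[i]) -> R[i],
    (forall g, E g -> @roots_of_unity R N (phi g)) ->
    exists x : G, forall g, E g -> phi g = g x.

Definition weak_Kronecker (R : realType) (G : topologicalZmodType) (eps : R[i])
    (E : set (G -> R[i])) : Prop :=
  forall phi : (G -> R[i]) -> R[i],
    (forall g, E g -> @circle R (phi g)) ->
    exists x : G, forall g, E g -> `|phi g - g x| <= eps.

Definition expi (R : realType) (t : R) : R[i] := Complex (cos t) (sin t).

(** The N-th roots of unity are spaced at angle 2π/N around T, so every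
    point of T lies at angle at most π/N, i.e. at distance at most
    |1 - e^{πi/N}|, from one of them.  Given φ : E -> T, round each φ(γ) to
    such a root; the N-PR property interpolates the rounded function exactly
    by some x ∈ G, and this x approximates φ within |1 - e^{πi/N}|. *)
From HB Require Import structures.
From mathcomp Require Import all_boot all_order all_algebra.
From mathcomp Require Import all_classical all_reals all_analysis.
From mathcomp Require Import complex.
From mathcomp Require Import ring lra.
Import Order.TTheory GRing.Theory Num.Theory.
Import numFieldNormedType.Exports.
Local Open Scope classical_set_scope.
Local Open Scope ring_scope.

Lemma natmul_near (F : archiRealFieldType) (t c : F) : 0 <= t -> 0 < c ->
  exists n : nat, `|t - c *+ n| <= c / 2.
Proof.
move=> t_ge0 c_gt0.
pose n := Num.truncn (t / c + 2^-1); exists n.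
have /andP[n_le n_gt] : n%:R <= t / c + 2^-1 < n.+1%:R.
  by apply: truncn_itv; rewrite addr_ge0 // divr_ge0 // ltW.
have -> : t - c *+ n = (t / c - n%:R) * c.
  by rewrite mulrBl divfK ?gt_eqF // mulr_natl.
rewrite normrM (gtr0_norm c_gt0) mulrC ler_pM2l // ler_norml.
rewrite -[n.+1%:R]natr1 in n_gt; apply/andP; split; lra.
Qed.

Section Expi.
Variable R : realType.
Implicit Types x y p t : R.

Lemma expi0 : expi 0 = 1 :> R[i].
Proof. by rewrite /expi cos0 sin0. Qed.

Lemma expiD x y : expi (x + y) = expi x * expi y.
Proof.
rewrite /expi cosD sinD; apply/eqP; rewrite eq_complex /=.
by apply/andP; split; apply/eqP; ring.
Qed.

Lemma expiMn x n : expi (x *+ n) = expi x ^+ n.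
Proof.
elim: n => [|n IHn]; first by rewrite mulr0n expi0.
by rewrite mulrS expiD IHn exprS.
Qed.

Lemma expi2pi : expi (pi *+ 2) = 1 :> R[i].
Proof. by rewrite -[pi *+ 2]add0r /expi cosD2pi sinD2pi cos0 sin0. Qed.

Lemma circle_expi (z : R[i]) : `|z| = 1 -> exists2 t, 0 <= t & z = expi t.
Proof.
case: z => a b /(congr1 (@complex.Re R)); rewrite normc_def /= => norm1.
have ab1 : a ^+ 2 + b ^+ 2 = 1.
  by rewrite -[LHS]sqr_sqrtr ?norm1 ?expr1n // addr_ge0 // sqr_ge0.
have a_itv : -1 <= a <= 1 by apply/andP; split; nra.
have sin_acosa : sin (acos a) = `|b|.
  by rewrite sin_acos // -sqrtr_sqr; congr Num.sqrt; lra.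
have acos_ge0 := acos_ge0 a_itv; have acos_lepi := acos_lepi a_itv.
have pi_gt0 := pi_gt0 R.
have [b_ge0 | b_lt0] := lerP 0 b.
- exists (acos a) => //.
  by rewrite /expi acosK // sin_acosa ger0_norm.
- exists (pi *+ 2 - acos a); first lra.
  by rewrite /expi addrC cosD2pi sinD2pi cosN sinN acosK // sin_acosa ltr0_norm // opprK.
Qed.

Lemma normr_expiB_sqr x y : `|expi x - expi y| ^+ 2 = (2 - 2 * cos (x - y))%:C%C.
Proof.
rewrite normc_def /= -rmorphXn sqr_sqrtr ?addr_ge0 ?sqr_ge0 //.
rewrite cosB; congr (_%:C)%C.
have := cos2Dsin2 x; have := cos2Dsin2 y.
move: (cos x) (sin x) (cos y) (sin y) => cx sx cy sy hy hx.
have -> : (cx - cy) ^+ 2 + (sx - sy) ^+ 2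
    = (cx ^+ 2 + sx ^+ 2) + (cy ^+ 2 + sy ^+ 2) - 2 * (cx * cy + sx * sy) by ring.
by rewrite hx hy.
Qed.

Lemma ler_cos_norm x p : `|x| <= p -> p <= pi -> cos p <= cos x.
Proof.
move=> xp p_lepi.
have cos_norm : cos `|x| = cos x.
  by have [/ger0_norm -> | /ltr0_norm ->] := lerP 0 x; rewrite ?cosN.
rewrite -cos_norm; move: xp; rewrite le_eqVlt => /orP[/eqP -> // | xp].
have p_ge0 : 0 <= p := le_trans (normr_ge0 x) (ltW xp).
by apply/ltW; rewrite ltr_cos // in_itv /= ?normr_ge0 ?p_ge0 ?p_lepi ?(le_trans (ltW xp)).
Qed.

Lemma ler_normr_expiB x y p : `|x - y| <= p -> p <= pi ->
  `|expi x - expi y| <= `|1 - expi p|.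
Proof.
move=> xyp p_lepi.
rewrite -ler_sqr ?nnegrE // -expi0 !normr_expiB_sqr add0r cosN lecR.
by rewrite lerD2l lerN2 ler_pM2l // ler_cos_norm.
Qed.

Lemma root_of_unity_near (N : nat) (z : R[i]) : (0 < N)%N -> `|z| = 1 ->
  exists2 w, w ^+ N = 1 & `|z - w| <= `|1 - expi (pi / N%:R)|.
Proof.
move=> N_gt0 /circle_expi[t t_ge0 ->].
have Nr_gt0 : 0 < N%:R :> R by rewrite ltr0n.
pose c : R := pi *+ 2 / N%:R.
have c_gt0 : 0 < c by rewrite divr_gt0 // mulrn_wgt0 // pi_gt0.
have [n tn] := @natmul_near R t c t_ge0 c_gt0.
exists (expi c ^+ n).
  by rewrite -exprM mulnC exprM -expiMn -mulr_natr divfK ?gt_eqF // expi2pi expr1n.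
have half_c : c / 2 = pi / N%:R by rewrite /c -mulr_natr; field; rewrite gt_eqF.
rewrite -expiMn; apply: ler_normr_expiB; first by rewrite -half_c.
by rewrite ler_pdivrMr // ler_peMr ?ler1n // ltW // pi_gt0.
Qed.

End Expi.

Lemma weak_Kronecker_of_N_PR (R : realType) (G : topologicalZmodType)
    (N : nat) (eps : R[i]) (E : set (G -> R[i])) :
  (forall z, circle z -> exists2 w, roots_of_unity N w & `|z - w| <= eps) ->
  N_PR N E -> weak_Kronecker eps E.
Proof.
move=> near_root PR_E phi phi_circle.
have near_root' z : exists w, circle z -> roots_of_unity N w /\ `|z - w| <= eps.
  have [/near_root[w w_root zw] | not_circle] := boolp.pselect (circle z).
    by exists w => _; split.
  by exists 0.
have [round round_spec] := boolp.choice near_root'.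
have [x x_interp] : exists x : G, forall g, E g -> round (phi g) = g x.
  by apply: PR_E => g Eg; case: (round_spec _ (phi_circle g Eg)).
exists x => g Eg; rewrite -x_interp //.
by case: (round_spec _ (phi_circle g Eg)).
Qed.

Theorem proposition2p7 (R : realType) (G : topologicalZmodType)
    (hG : hausdorff_space G) (cG : compact [set: G])
    (N : nat) (hN : (0 < N)%N) (E : set (G -> R[i]))
    (hE : E `<=` @dual_group R G) :
  N_PR N E -> weak_Kronecker `|1 - expi (pi / N%:R)| E.
Proof.
apply: weak_Kronecker_of_N_PR => z z_circle.
exact: root_of_unity_near hN z_circle.
Qed.
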